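(* Consider an instance of the Nash equilibrium complementarity problem (NECP) that satisfies the dominance condition, and the instance of the tropical Nash equilibrium complementarity problem (TNECP) given by its logarithmic image ($M^-=\log(-M)$, $q^+=\log q$). The sequence of bases over which the Lemke--Howson algorithm iterates does not depend on whether it is applied to the classical instance or the tropical one. In particular, it returns a basis of a solution of the classical instance within at most $2n-1$ iterations.
   Context: NECP: given $n\times n$ real $M$ with nonpositive columns each having a negative entry and $q>0$, find $(w,z)$ with $w=Mz+q$, $w^\top z=0$, $z\neq 0$, $w,z\geq0$; written as $(I\ \ -M)\binom{w}{z}=q$ with columns indexed by $[n]\uplus[n]$ (blue copy for $w$, red for $z$). TNECP over max-plus $\mathbb{T}=\mathbb{R}\cup\{-\infty\}$: $w\oplus M^-\odot z=q^+$, $w^\top\odot z=-\infty$, $z\neq-\infty$. Classical bases are feasible bases of the linear system; tropical bases of $A\odot x=b$ are $B$ with $|B|=n$ and a bijection $\phi:[n]\to B$ such that $b_i-A_{i\phi(i)}\in\mathbb{T}$ is minimal among $b_k-A_{k\phi(i)}$. Dominance condition: the normalized matrix $(\operatorname{diag} q)^{-1}(I\ \ -M)(\operatorname{diag} u)^{-1}$ ($u_j$ = max entry of column $j$ of $(\operatorname{diag} q)^{-1}(I\ \ -M)$) satisfies (a) some $n\times n$ submatrix covers a permutation matrix and (b) every $n\times n$ submatrix covering a permutation matrix has all row sums less than $2$; under it both systems are nondegenerate. The Lemke--Howson algorithm, for fixed $j^\star\in[n]$, starts from basis $[n]\uplus\varnothing$ with entering element $(j^\star,\text{red})$, repeatedly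 pivots to the unique other basis in $B\cup\{\gamma\}$, takes as next entering element the twin (same label, other color) of the leaving element, and stops at a fully labeled basis (all labels $1,\dots,n$ appear). *)

From HB Require Import structures.
From mathcomp Require Import all_boot all_order all_algebra.
From mathcomp Require Import reals exp.
Set Implicit Arguments. Unset Strict Implicit. Unset Printing Implicit Defensive.
Import Order.TTheory GRing.Theory Num.Theory.
Local Open Scope ring_scope.

(* Columns of (I  -M) are indexed by [n] (+) [n]:
   inl i = blue copy (variable w_i), inr i = red copy (variable z_i). *)
Definition lhcol (n : nat) : finType := ('I_n + 'I_n)%type.

Definition label n (c : lhcol n) : 'I_n := match c with inl i => i | inr i => i end.
Definition twin n (c : lhcol n) : lhcol n := match c with inl i => inr i | inr i => inl i end.

Definition fully_labeled n (B : {set lhcol n}) : Prop :=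
  forall i : 'I_n, exists2 c, c \in B & label c = i.

Definition blue_basis n : {set lhcol n} := [set c : lhcol n | if c is inl _ then true else false].

Section Instances.
Variable R : realType.
Variable n : nat.

Definition necp_instance (M : 'M[R]_n) (q : 'I_n -> R) : Prop :=
  (forall i j, M i j <= 0) /\ (forall j, exists i, M i j < 0) /\ (forall i, 0 < q i).

Definition Acl (M : 'M[R]_n) (i : 'I_n) (c : lhcol n) : R :=
  match c with inl j => (i == j)%:R | inr j => - M i j end.

Definition Aapply (M : 'M[R]_n) (x : lhcol n -> R) (i : 'I_n) : R :=
  \sum_(c : lhcol n) Acl M i c * x c.

Definition supported (B : {set lhcol n}) (x : lhcol n -> R) : Prop :=
  forall c, c \notin B -> x c = 0.

Definition classical_basis (M : 'M[R]_n) (q : 'I_n -> R) (B : {set lhcol n}) : Prop :=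
  #|B| = n /\
  (forall x, supported B x -> (forall i, Aapply M x i = 0) -> forall c, x c = 0) /\
  (exists x, supported B x /\ (forall c, 0 <= x c) /\ (forall i, Aapply M x i = q i)).

(* Tropical semiring T = R u {-oo}, encoded as option R (None = -oo). *)
Definition tlog (x : R) : option R := if 0 < x then Some (ln x) else None.

(* tropical matrix of w (+) M^- (.) z = q^+ : (tropical identity | M^-),
   with M^- = log(-M) entrywise, and right-hand side q^+ = log q *)
Definition Atr (M : 'M[R]_n) (i : 'I_n) (c : lhcol n) : option R :=
  match c with inl j => if i == j then Some 0 else None | inr j => tlog (- M i j) end.

(* tropical bases of A (.) x = b: |B| = n and a bijection phi : [n] -> B such that
   b_i - A_{i phi(i)} is in T (i.e. finite) and minimal among the b_k - A_{k phi(i)}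
   (entries with A_{k phi(i)} = -oo give +oo, hence impose no constraint) *)
Definition tropical_basis (M : 'M[R]_n) (q : 'I_n -> R) (B : {set lhcol n}) : Prop :=
  #|B| = n /\
  exists phi : 'I_n -> lhcol n,
    injective phi /\ (forall i, phi i \in B) /\
    forall i, exists2 a, Atr M i (phi i) = Some a &
      forall k a', Atr M k (phi i) = Some a' -> ln (q i) - a <= ln (q k) - a'.

Definition Pnorm (M : 'M[R]_n) (q : 'I_n -> R) (i : 'I_n) (c : lhcol n) : R :=
  Acl M i c / q i.
Definition colmax (M : 'M[R]_n) (q : 'I_n -> R) (c : lhcol n) : R :=
  \big[Num.max/0]_(i < n) Pnorm M q i c.
Definition Nnorm (M : 'M[R]_n) (q : 'I_n -> R) (i : 'I_n) (c : lhcol n) : R :=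
  Pnorm M q i c / colmax M q c.

Definition covers_perm (N : 'I_n -> lhcol n -> R) (C : {set lhcol n}) : Prop :=
  exists psi : 'I_n -> lhcol n,
    injective psi /\ (forall i, psi i \in C) /\ (forall i, 1 <= N i (psi i)).

Definition dominance (M : 'M[R]_n) (q : 'I_n -> R) : Prop :=
  (exists C : {set lhcol n}, #|C| = n /\ covers_perm (Nnorm M q) C) /\
  (forall C : {set lhcol n}, #|C| = n -> covers_perm (Nnorm M q) C ->
     forall i, \sum_(c in C) Nnorm M q i c < 2).

End Instances.

Section LH.
Variable n : nat.
Variable isB : {set lhcol n} -> Prop.

Definition pivot (B : {set lhcol n}) (g : lhcol n) (B' : {set lhcol n}) : Prop :=
  isB B' /\ B' \subset g |: B /\ B' <> B /\
  (forall B'', isB B'' -> B'' \subset g |: B -> B'' = B \/ B'' = B').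

Fixpoint lh_from (g : lhcol n) (B : {set lhcol n}) (s : seq {set lhcol n}) : Prop :=
  match s with
  | [::] => False
  | B' :: s' =>
      pivot B g B' /\
      (if s' is [::] then fully_labeled B'
       else ~ fully_labeled B' /\
            exists2 l, l \in B :\: B' & lh_from (twin l) B' s')
  end.

(* the sequence s = [B_1; ...; B_m] of bases after the initial basis [n] (+) {},
   with first entering element (jstar, red); m = size s is the number of iterations *)
Definition lh_path (jstar : 'I_n) (s : seq {set lhcol n}) : Prop :=
  lh_from (inr jstar) (blue_basis n) s.

End LH.

(* Normalize every column of (I  -M) by diag(q)^-1 and by its own maximum: its
   entries then lie in [0, 1] and it attains 1 in some row, its peak.  Under the
   dominance condition the peak of each column is unique, and both the classical
   and the tropical bases are exactly the sets of n columns with pairwise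
   distinct peaks.  For the tropical system the minimality condition on phi(i)
   says precisely that phi(i) peaks at row i.  For the classical system, such a
   basis is, once reordered, a nonnegative matrix with unit diagonal and
   off-diagonal row sums below 1, hence invertible with a nonnegative solution;
   conversely a feasible basis in which no column peaks at some row i0 yields,
   by choosing the heaviest column of every peak fiber, a covering whose row i0
   sums to at least 2.  So in both settings a pivot exchanges the entering
   column with the unique basic column of the same peak, and the two
   Lemke--Howson paths coincide.

   Let tau j be the peak of the red column j.  From j*, the path first adds the
   red columns of the orbit j*, tau j*, tau^2 j*, ...; it stops as soon as the
   orbit returns to j*, and if instead the orbit closes up into a cycle avoiding
   j*, it removes the red columns of the tail while those of the cycle stay.
   Forward steps add and backward steps remove one red column, which bounds the
   number of iterations by 2n - 1. *)

From HB Require Import structures.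
From mathcomp Require Import all_boot all_order all_algebra.
From mathcomp Require Import boolp reals exp.
From mathcomp.algebra_tactics Require Import ring lra.
From mathcomp Require Import zify.
Set Implicit Arguments. Unset Strict Implicit. Unset Printing Implicit Defensive.
Import Order.TTheory GRing.Theory Num.Theory.
Local Open Scope ring_scope.

Lemma in_exchange (T : finType) (B : {set T}) g c e :
  (e \in g |: (B :\ c)) = (e == g) || ((e != c) && (e \in B)).
Proof. by rewrite in_setU1 in_setD1. Qed.

Section Labels.
Variable n : nat.
Implicit Types (B : {set lhcol n}) (c e : lhcol n).

Lemma has_labelP B l :
  (exists2 e, e \in B & label e = l) <-> (inl l \in B) || (inr l \in B).
Proof.
split=> [[[j|j] eB /= <-]|/orP[lB|lB]]; rewrite ?eB ?orbT //.
- by exists (inl l).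
- by exists (inr l).
Qed.

Lemma lhcol_eqE (a b : 'I_n) :
  ((inl a == inl b :> lhcol n) = (a == b)) * ((inr a == inr b :> lhcol n) = (a == b)) *
  ((inl a == inr b :> lhcol n) = false) * ((inr a == inl b :> lhcol n) = false).
Proof. by []. Qed.

Lemma neq_of_label e e' : label e != label e' -> e != e'.
Proof. by apply: contra => /eqP ->. Qed.

Lemma label_twin c : label (twin c) = label c.
Proof. by case: c. Qed.

Definition is_red c : bool := if c is inr _ then true else false.

Definition red_count B := (\sum_(e in B) is_red e)%N.

Lemma red_countE B : red_count B = #|[set l | inr l \in B]|.
Proof.
rewrite /red_count big_sumType /= big1 // add0n -sum1_card.
by rewrite big_mkcond [RHS]big_mkcond; apply: eq_bigr => l _; rewrite inE.
Qed.

Lemma red_count_exchange B g c : g \notin B -> c \in B ->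
  (red_count (g |: (B :\ c)) + is_red c = red_count B + is_red g)%N.
Proof.
move=> gB cB; rewrite /red_count (big_setD1 c cB) /= big_setU1 /=.
  by rewrite addnC addnA [RHS]addnAC.
by apply: contra gB => /setD1P[].
Qed.

Lemma card_blue_basis : #|blue_basis n| = n.
Proof.
have -> : blue_basis n = inl @: setT.
  apply/setP => -[j|j]; rewrite inE /=; first by rewrite imset_f ?in_setT.
  by apply/esym/imsetP => -[k _].
by rewrite card_imset ?cardsT ?card_ord //; move=> a b [].
Qed.

End Labels.

(** * Peak bases and their pivots *)

Section PeakBasis.
Variables (n : nat) (sg : lhcol n -> 'I_n).
Implicit Types B : {set lhcol n}.

(* With sg the peak map, these are both the classical and the tropical bases. *)
Definition peak_basis (B : {set lhcol n}) := #|B| = n /\ {in B &, injective sg}.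

Lemma peak_basis_onto B : peak_basis B -> forall i, exists2 c, c \in B & sg c = i.
Proof.
move=> [cardB injB] i.
have /eqP sgB : sg @: B == setT.
  by rewrite eqEcard subsetT cardsT card_ord (card_in_imset injB) cardB leqnn.
have /imsetP[c cB ->] : i \in sg @: B by rewrite sgB in_setT.
by exists c.
Qed.

Lemma eq_image_injective B (f : 'I_n -> lhcol n) :
  #|B| = n -> (forall i, f i \in B) -> injective f -> B = f @: setT.
Proof.
move=> cardB fB injf; apply/eqP.
rewrite eq_sym eqEcard (card_imset _ injf) cardsT card_ord cardB leqnn andbT.
by apply/subsetP => _ /imsetP[i _ ->].
Qed.

Lemma peak_basis_of_section B (f : 'I_n -> lhcol n) :
  #|B| = n -> (forall i, f i \in B) -> (forall i, sg (f i) = i) -> peak_basis B.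
Proof.
move=> cardB fB sgf; split=> // c1 c2.
rewrite (eq_image_injective cardB fB (can_inj sgf)).
by move=> /imsetP[i1 _ ->] /imsetP[i2 _ ->]; rewrite !sgf => ->.
Qed.

Lemma peak_basis_section B : peak_basis B ->
  exists f : 'I_n -> lhcol n, (forall i, sg (f i) = i) /\ B = f @: setT.
Proof.
move=> basisB; have [cardB _] := basisB.
have /fin_all_exists2[f fB sgf] := peak_basis_onto basisB.
by exists f; split=> //; apply: eq_image_injective (can_inj sgf).
Qed.

Lemma pivot_peak_basis B g c : peak_basis B -> g \notin B -> c \in B -> sg c = sg g ->
  pivot peak_basis B g (g |: (B :\ c)).
Proof.
move=> [cardB injB] gB cB sgc.
have gc : g != c by apply: contraNneq gB => ->.
have cardB' : #|g |: (B :\ c)| = n.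
  by rewrite cardsU1 in_setD1 (negbTE gB) andbF; rewrite (cardsD1 c B) cB in cardB.
have basisB' : peak_basis (g |: (B :\ c)).
  split=> // x y; rewrite !in_exchange.
  move=> /orP[/eqP->|/andP[xc xB]] /orP[/eqP->|/andP[yc yB]] // e.
  - by move: yc; rewrite -(injB c y) ?eqxx // sgc.
  - by move: xc; rewrite -(injB c x) ?eqxx // sgc.
  - exact: injB.
split=> //; split.
  by apply/subsetP => x; rewrite in_exchange in_setU1 => /orP[->|/andP[_ ->]]; rewrite ?orbT.
split=> [B'E|B'' [cardB'' injB''] /subsetP subB''].
  by move: gB; rewrite -B'E in_setU1 eqxx.
have eq_of_sub (B1 B2 : {set lhcol n}) : #|B1| = n -> #|B2| = n -> B1 \subset B2 -> B1 = B2.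
  by move=> c1 c2 sub; apply/eqP; rewrite eqEcard sub c1 c2 leqnn.
case: (boolP (g \in B'')) => gB''; [right | left]; apply: eq_of_sub => //.
  apply/subsetP => x xB''; rewrite in_exchange.
  have := subB'' x xB''; rewrite in_setU1 => /orP[->//|xB].
  case: (eqVneq x c) => [xc|_]; last by rewrite xB orbT.
  by move: gc; rewrite -xc (injB'' g x) ?eqxx // -sgc xc.
apply/subsetP => x xB''.
have := subB'' x xB''; rewrite in_setU1 => /orP[/eqP xg|//].
by move: gB''; rewrite -xg xB''.
Qed.

Hypothesis sg_inl : forall j, sg (inl j) = j.

Lemma peak_basis_blue : peak_basis (blue_basis n).
Proof.
split; first exact: card_blue_basis.
by move=> [a|a] [b|b]; rewrite !inE //= !sg_inl => _ _ ->.
Qed.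

End PeakBasis.

(** * The Lemke--Howson path on peak bases *)

Section LemkeHowsonPath.
Variables (n : nat) (sg : lhcol n -> 'I_n) (j0 : 'I_n).
Hypothesis sg_inl : forall j, sg (inl j) = j.
Implicit Types (B : {set lhcol n}) (c g : lhcol n).

Local Notation peak_basis := (peak_basis sg).

Definition tau j := sg (inr j).

Local Notation orbit := (traject tau j0).
Local Notation orbit_at t := (iter t tau j0).

Lemma orbit_iter_inj m a b :
  uniq (orbit m) -> (a < m)%N -> (b < m)%N -> orbit_at a = orbit_at b -> a = b.
Proof.
move=> u am bm e; apply/eqP.
by rewrite -(nth_uniq j0 _ _ u) ?size_traject // !nth_traject // e.
Qed.

Lemma uniq_orbit_prefix m : uniq (orbit m.+1) -> uniq (orbit m).
Proof. by rewrite trajectSr rcons_uniq => /andP[]. Qed.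

Lemma orbit_size_le m : uniq (orbit m) -> (m <= n)%N.
Proof.
move=> u; rewrite -[m](size_traject tau j0) -(card_uniqP u).
by apply: leq_trans (max_card _) _; rewrite card_ord.
Qed.

Lemma red_count_orbit B m : uniq (orbit m) ->
  (forall l, (inr l \in B) = (l \in orbit m)) -> red_count B = m.
Proof.
move=> u Br; rewrite red_countE -[RHS](size_traject tau j0) -(card_uniqP u).
by apply: eq_card => l; rewrite inE Br.
Qed.

Record almost_complete B g : Prop := AlmostComplete {
  ac_peak_basis : peak_basis B;
  ac_entering_label : label g != j0;
  ac_inl_entering : inl (label g) \notin B;
  ac_inr_entering : inr (label g) \notin B;
  ac_inl_j0 : inl j0 \in B;
  ac_inr_j0 : inr j0 \in B;
  ac_other_labels : forall l, l != label g -> l != j0 -> (inl l \in B) != (inr l \in B) }.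

Definition forward_phase B j := exists m,
  [/\ j = orbit_at m, uniq (orbit m.+1) & forall l, (inr l \in B) = (l \in orbit m)].

(* D is the cycle of the orbit; it keeps a red column in the basis up to the end. *)
Definition backward_phase B := exists D : {set 'I_n},
  [/\ D != set0, j0 \notin D & forall d, d \in D -> (inr d \in B) && (tau d \in D)].

Definition lh_phase B g := if g is inr j then forward_phase B j else backward_phase B.

Definition lh_state B g := almost_complete B g /\ lh_phase B g.

(* A forward pivot adds a red column, a backward one removes one, and a forward
   basis has fewer than n red columns: this decreases at every pivot. *)
Definition lh_potential B g :=
  if g is inr _ then (2 * n - 2 - red_count B)%N else (red_count B).-1.

Definition lh_final B := [/\ fully_labeled B, peak_basis B & exists l, inr l \in B].

Lemma entering_notin B g : almost_complete B g -> g \notin B.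
Proof. by case: g => j []. Qed.

Lemma exchange_fully_labeled B g c : almost_complete B g -> c \in B -> label c = j0 ->
  fully_labeled (g |: (B :\ c)).
Proof.
move=> ac cB lc i; apply/has_labelP; rewrite !in_exchange.
have neq_c e : label e != j0 -> e != c by rewrite -lc; apply: neq_of_label.
case: (eqVneq i (label g)) => [->|ig]; first by case: (g) => j /=; rewrite eqxx ?orbT.
case: (eqVneq i j0) => [->|ij0].
  by case: (c) cB lc => j cB /= ->; rewrite (ac_inr_j0 ac) (ac_inl_j0 ac) !orbT.
have := ac_other_labels ac ig ij0.
case: (boolP (inl i \in B)) => iB; case: (boolP (inr i \in B)) => iB' //= _.
- by rewrite (neq_c (inl i)) ?orbT.
- by rewrite (neq_c (inr i)) ?orbT.
Qed.

Lemma exchange_almost_complete B g c :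
  almost_complete B g -> c \in B -> sg c = sg g -> label c != j0 ->
  ~ fully_labeled (g |: (B :\ c)) /\ almost_complete (g |: (B :\ c)) (twin c).
Proof.
move=> ac cB sgc lc.
have gB := entering_notin ac.
have lcg : label c != label g.
  apply/eqP; case: (c) cB => j cB /= jg.
  - by move: (ac_inl_entering ac); rewrite -jg cB.
  - by move: (ac_inr_entering ac); rewrite -jg cB.
have twin_notin : twin c \notin B.
  move: (ac_other_labels ac lcg lc).
  by case: (c) cB => j /= ->; [case: (inr j \in B) | case: (inl j \in B)].
have neq_g e : label e != label g -> (e == g) = false.
  by move=> leg; apply/negbTE/neq_of_label.
have neq_c e : label e != label c -> e != c by apply: neq_of_label.
have inl_c : (inl (label c) \in g |: (B :\ c)) = false.
  rewrite in_exchange neq_g //=.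
  by case: (c) (twin_notin) => j /= jB; rewrite ?eqxx ?(negbTE jB).
have inr_c : (inr (label c) \in g |: (B :\ c)) = false.
  rewrite in_exchange neq_g //=.
  by case: (c) (twin_notin) => j /= jB; rewrite ?eqxx ?(negbTE jB) ?andbF.
split; first by move=> /(_ (label c)) /has_labelP; rewrite inl_c inr_c.
have j0c : j0 != label c by rewrite eq_sym.
constructor; rewrite ?label_twin ?inl_c ?inr_c //.
- by have [] := pivot_peak_basis (ac_peak_basis ac) gB cB sgc.
- by rewrite in_exchange neq_c // (ac_inl_j0 ac) orbT.
- by rewrite in_exchange neq_c // (ac_inr_j0 ac) orbT.
move=> l lc' lj0; rewrite !in_exchange !neq_c //=.
case: (eqVneq l (label g)) => [->|lg]; last first.
  by rewrite (neq_g (inl l)) // (neq_g (inr l)) //=; move: (ac_other_labels ac lg lj0).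
case: (g) (ac_inl_entering ac) (ac_inr_entering ac) => j /= jB jB'; rewrite eqxx /=.
- by rewrite (negbTE jB').
- by rewrite (negbTE jB).
Qed.

Lemma final_step B g c : lh_state B g -> c \in B -> sg c = sg g -> label c = j0 ->
  lh_final (g |: (B :\ c)).
Proof.
move=> [ac ph] cB sgc lc; split.
- exact: exchange_fully_labeled.
- by have [] := pivot_peak_basis (ac_peak_basis ac) (entering_notin ac) cB sgc.
case: g ac ph {sgc} => j ac; last by exists j; rewrite setU11.
case=> D [/set0Pn[d dD] j0D DB]; exists d.
have /andP[dB _] := DB d dD.
rewrite in_exchange dB neq_of_label ?orbT // lc.
by apply: contraNneq j0D => <-.
Qed.

Lemma backward_step B j l : almost_complete B (inl j) -> backward_phase B ->
  inr l \in B -> tau l = j -> l != j0 ->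
  lh_phase (inl j |: (B :\ inr l)) (twin (inr l)) /\
  (lh_potential (inl j |: (B :\ inr l)) (twin (inr l)) < lh_potential B (inl j))%N.
Proof.
move=> ac [D [D0 j0D DB]] lB taul lj0.
have red_count_dec := red_count_exchange (entering_notin ac) lB.
have red_count_pos : (0 < red_count (inl j |: (B :\ inr l)))%N.
  rewrite red_countE card_gt0; apply/set0Pn; exists j0.
  by rewrite inE in_exchange /= eq_sym lj0 (ac_inr_j0 ac).
have lD : l \notin D.
  apply/negP => /DB /andP[_]; rewrite taul => /DB /andP[jB _].
  by move: (ac_inr_entering ac); rewrite /= jB.
split.
  exists D; split=> // d dD; have /andP[dB ->] := DB d dD.
  by rewrite andbT in_exchange /= dB andbT; apply: contraNneq lD => -[<-].
move: red_count_dec red_count_pos => /=.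
by rewrite addn1 addn0 => <- /=; rewrite ltn_predL.
Qed.

Lemma forward_blue_step B j l : almost_complete B (inr j) -> forward_phase B j ->
  inl l \in B -> tau j = l -> l != j0 ->
  lh_phase (inr j |: (B :\ inl l)) (twin (inl l)) /\
  (lh_potential (inr j |: (B :\ inl l)) (twin (inl l)) < lh_potential B (inr j))%N.
Proof.
move=> ac [m [jm u Br]] lB taul lj0.
have lj : l != j by apply: contraTneq lB => ->; apply: (ac_inl_entering ac).
have l_notin : l \notin orbit m.
  by rewrite -Br; move: (ac_other_labels ac lj lj0); rewrite lB.
have orbit_next : orbit_at m.+1 = l by rewrite iterS -jm.
have orbit_mS l' : (l' \in orbit m.+1) = (l' == j) || (l' \in orbit m).
  by rewrite trajectSr mem_rcons in_cons jm.
have u' : uniq (orbit m.+2).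
  by rewrite trajectSr rcons_uniq u orbit_next orbit_mS negb_or lj l_notin.
have Br' l' : (inr l' \in inr j |: (B :\ inl l)) = (l' \in orbit m.+1).
  by rewrite in_exchange !lhcol_eqE /= Br orbit_mS.
have red_m := red_count_orbit (uniq_orbit_prefix u) Br.
have red_mS := red_count_orbit (uniq_orbit_prefix u') Br'.
have m_le := orbit_size_le u'.
by split; [exists m.+1 | rewrite /= red_m red_mS; lia].
Qed.

Lemma orbit_cycle m t : uniq (orbit m.+1) -> (t < m)%N -> orbit_at m.+1 = orbit_at t.+1 ->
  exists D : {set 'I_n}, [/\ D != set0, j0 \notin D, {in D, forall d, tau d \in D} &
    {in D, forall d, exists2 s, (t < s <= m)%N & d = orbit_at s}].
Proof.
move=> u tm cycle.
have iterE i : iter i tau (orbit_at t.+1) = orbit_at (i + t.+1) by rewrite iterD.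
exists [set d in traject tau (orbit_at t.+1) (m - t)].
have Dorbit : {in [set d in traject tau (orbit_at t.+1) (m - t)],
    forall d, exists2 s, (t < s <= m)%N & d = orbit_at s}.
  move=> d; rewrite inE => /trajectP[i im ->].
  by exists (i + t.+1); [lia | rewrite iterE].
split=> //.
- by apply/set0Pn; exists (orbit_at t.+1); rewrite inE; apply/trajectP; exists 0%N => //; lia.
- apply/negP => /Dorbit[s /andP[ts sm] j0s].
  by have := orbit_iter_inj u (ltn0Sn m) (sm : (s < m.+1)%N) j0s; lia.
move=> d; rewrite !inE => /trajectP[i im ->]; apply/trajectP; rewrite -iterS.
case: (ltnP i.+1 (m - t)) => [iS|iS]; first by exists i.+1.
by exists 0%N; [lia | rewrite iterE (_ : (i.+1 + t.+1 = m.+1)%N) //; lia].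
Qed.

Lemma forward_red_step B j l : forward_phase B j -> inr l \in B -> tau l = tau j ->
  lh_phase (inr j |: (B :\ inr l)) (twin (inr l)) /\
  (lh_potential (inr j |: (B :\ inr l)) (twin (inr l)) < lh_potential B (inr j))%N.
Proof.
move=> [m [jm u Br]] lB taul.
have um := uniq_orbit_prefix u.
have jB : inr j \notin B.
  by move: u; rewrite Br jm trajectSr rcons_uniq => /andP[].
have [t tm lt] : exists2 t, (t < m)%N & l = orbit_at t by apply/trajectP; rewrite -Br.
have cycle : orbit_at m.+1 = orbit_at t.+1 by rewrite !iterS -jm -lt taul.
have [D [D0 j0D Dtau Dorbit]] := orbit_cycle u tm cycle.
have red_eq := red_count_exchange jB lB.
have red_m := red_count_orbit um Br.
have m_le := orbit_size_le u.
split; last by move: red_eq => /=; rewrite red_m !addn1 => -[->]; lia.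
exists D; split=> // d dD; rewrite Dtau // andbT in_exchange !lhcol_eqE /=.
have [s /andP[ts sm] ->] := Dorbit d dD.
case: (ltnP s m) => [sm'|ms]; last by rewrite jm (_ : s = m) ?eqxx //; lia.
rewrite Br; apply/orP; right; apply/andP; split; last by apply/trajectP; exists s.
apply/eqP; rewrite lt => /(orbit_iter_inj u) e.
by have := e (leqW sm') (leqW tm); lia.
Qed.

Lemma lh_phase_step B g c : lh_state B g -> c \in B -> sg c = sg g -> label c != j0 ->
  lh_phase (g |: (B :\ c)) (twin c) /\
  (lh_potential (g |: (B :\ c)) (twin c) < lh_potential B g)%N.
Proof.
move=> [ac ph] cB sgc lc.
case: g ac ph sgc => j ac ph; case: c cB lc => l cB lc; rewrite ?sg_inl => sgc.
- by move: (ac_inl_entering ac); rewrite /= -sgc cB.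
- exact: backward_step.
- exact: forward_blue_step.
- exact: forward_red_step.
Qed.

Lemma lh_step B g : lh_state B g -> exists2 c, c \in B :\: (g |: (B :\ c)) &
  pivot peak_basis B g (g |: (B :\ c)) /\
  (lh_final (g |: (B :\ c)) \/
   [/\ ~ fully_labeled (g |: (B :\ c)), lh_state (g |: (B :\ c)) (twin c) &
       (lh_potential (g |: (B :\ c)) (twin c) < lh_potential B g)%N]).
Proof.
move=> st; have [ac _] := st; have gB := entering_notin ac.
have [c cB sgc] := peak_basis_onto (ac_peak_basis ac) (sg g).
exists c.
  rewrite in_setD cB andbT in_exchange eqxx orbF.
  by apply: contraNneq gB => <-.
split; first exact: pivot_peak_basis (ac_peak_basis ac) gB cB sgc.
have [lc|lc] := eqVneq (label c) j0; first by left; apply: final_step.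
right; have [nf ac'] := exchange_almost_complete ac cB sgc lc.
by have [ph' dec] := lh_phase_step st cB sgc lc.
Qed.

Lemma lh_from_state k B g : lh_state B g -> (lh_potential B g <= k)%N ->
  exists s, [/\ lh_from peak_basis g B s, (size s <= (lh_potential B g).+1)%N &
                lh_final (last B s)].
Proof.
elim: k B g => [|k IH] B g st pot; have [c cB [piv [fin|[nf st' dec]]]] := lh_step st.
1,3: by exists [:: g |: (B :\ c)]; split=> //; split=> //; case: fin.
  by lia.
have pot' : (lh_potential (g |: (B :\ c)) (twin c) <= k)%N by lia.
have [[|B' s] [path sz fin]] := IH _ _ st' pot'; first by [].
exists (g |: (B :\ c) :: B' :: s); split=> //=; last by move: sz => /=; lia.
by do 2 split=> //; exists c.
Qed.

Definition first_basis := inr j0 |: (blue_basis n :\ inl (tau j0)).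

Lemma inl_first_basis l : (inl l \in first_basis) = (l != tau j0).
Proof. by rewrite in_exchange !lhcol_eqE inE andbT. Qed.

Lemma inr_first_basis l : (inr l \in first_basis) = (l == j0).
Proof. by rewrite in_exchange !lhcol_eqE inE andbF orbF. Qed.

Lemma pivot_first_basis : pivot peak_basis (blue_basis n) (inr j0) first_basis.
Proof. by apply: pivot_peak_basis; rewrite ?inE ?sg_inl //; apply: peak_basis_blue. Qed.

Lemma lh_state_first_basis : tau j0 != j0 -> lh_state first_basis (inr (tau j0)).
Proof.
move=> tj; split; last first.
  exists 1%N; split=> //; first by rewrite /= inE andbT eq_sym.
  by move=> l; rewrite inr_first_basis inE.
have [basis _] := pivot_first_basis.
constructor=> //=.
- by rewrite inl_first_basis eqxx.
- by rewrite inr_first_basis (negbTE tj).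
- by rewrite inl_first_basis eq_sym.
- by rewrite inr_first_basis.
by move=> l ltj lj0; rewrite inl_first_basis inr_first_basis ltj (negbTE lj0).
Qed.

Lemma lh_path_peak_basis : exists s,
  [/\ lh_path peak_basis j0 s, (size s <= 2 * n - 1)%N & lh_final (last (blue_basis n) s)].
Proof.
(* The blue basis is not almost complete: the first pivot is done by hand. *)
have piv := pivot_first_basis; have [basis _] := piv.
have n_gt0 : (0 < n)%N by case: (j0) => /= k; lia.
have [tj|tj] := eqVneq (tau j0) j0.
  have fl : fully_labeled first_basis.
    move=> i; apply/has_labelP; rewrite inl_first_basis inr_first_basis tj.
    by case: (i == j0).
  exists [:: first_basis]; split=> //=; first lia.
  by split=> //; exists j0; rewrite inr_first_basis.
have [[|B s] [path sz fin]] := lh_from_state (lh_state_first_basis tj) (leqnn _) => //.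
exists (first_basis :: B :: s); split=> //.
  split=> //; split.
    move=> /(_ (tau j0)) /has_labelP.
    by rewrite inl_first_basis inr_first_basis eqxx (negbTE tj).
  by exists (inl (tau j0)); rewrite // in_setD inl_first_basis eqxx inE.
have u : uniq (orbit 2) by rewrite /= inE andbT eq_sym.
have red1 : red_count first_basis = 1%N.
  by apply: (red_count_orbit (uniq_orbit_prefix u)) => l; rewrite inr_first_basis inE.
by move: sz (orbit_size_le u); rewrite /= red1; lia.
Qed.

End LemkeHowsonPath.

(** * Diagonally dominant systems *)

Section DiagonallyDominant.
Variables (R : realFieldType) (I : finType) (A : I -> I -> R).
Hypothesis A_ge0 : forall i j, 0 <= A i j.
Hypothesis A_diag : forall i, A i i = 1.
Hypothesis A_offdiag_lt1 : forall i, \sum_(j | j != i) A i j < 1.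

Lemma dd_rowE (y : I -> R) i :
  \sum_j A i j * y j = y i + \sum_(j | j != i) A i j * y j.
Proof. by rewrite (bigD1 i) //= A_diag mul1r. Qed.

Lemma dd_offdiag_le (y : I -> R) i b : (forall j, y j <= b) ->
  \sum_(j | j != i) A i j * y j <= (\sum_(j | j != i) A i j) * b.
Proof.
by move=> yb; rewrite mulr_suml; apply: ler_sum => j _; apply: ler_wpM2l.
Qed.

Lemma dd_offdiag_ge (y : I -> R) i b : (forall j, b <= y j) ->
  (\sum_(j | j != i) A i j) * b <= \sum_(j | j != i) A i j * y j.
Proof.
by move=> yb; rewrite mulr_suml; apply: ler_sum => j _; apply: ler_wpM2l.
Qed.

Lemma dd_kernel (y : I -> R) : (forall i, \sum_j A i j * y j = 0) -> forall j, y j = 0.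
Proof.
(* At i maximizing |y i|, row i gives |y i| <= (off-diagonal sum) |y i| < |y i|. *)
move=> Ay j; apply/normr0_eq0/eqP; rewrite eq_le normr_ge0 andbT.
have [i _ imax] := @arg_maxP _ _ _ j predT (fun k => `|y k|) isT.
apply: le_trans (imax j isT) _; rewrite leNgt; apply/negP => yi_gt0.
have bound : `|\sum_(k | k != i) A i k * y k| <= (\sum_(k | k != i) A i k) * `|y i|.
  apply: le_trans (ler_norm_sum _ _ _) _; rewrite mulr_suml.
  apply: ler_sum => k _; rewrite normrM ger0_norm //.
  exact: ler_wpM2l (imax k isT).
have : \sum_(k | k != i) A i k * y k = - y i by have := Ay i; rewrite dd_rowE; lra.
move=> /(congr1 (fun v => `|v|)); rewrite normrN => E; rewrite E in bound.
have := A_offdiag_lt1 i; rewrite -(ltr_pM2r yi_gt0) mul1r => lt.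
by have := le_lt_trans bound lt; rewrite ltxx.
Qed.

Lemma dd_solution_ge0 (y : I -> R) : (forall i, \sum_j A i j * y j = 1) ->
  forall j, 0 <= y j.
Proof.
move=> Ay j; rewrite leNgt; apply/negP => yj_lt0.
have [i1 _ i1min] := @arg_minP _ _ _ j predT y isT.
have [i2 _ i2max] := @arg_maxP _ _ _ j predT y isT.
have r1_ge0 : 0 <= \sum_(k | k != i1) A i1 k by apply: sumr_ge0.
have r2_ge0 : 0 <= \sum_(k | k != i2) A i2 k by apply: sumr_ge0.
move: (Ay i1) (Ay i2); rewrite !dd_rowE.
move: (dd_offdiag_le i1 (fun k => i2max k isT)) (dd_offdiag_ge i2 (fun k => i1min k isT)).
move: (A_offdiag_lt1 i1) (A_offdiag_lt1 i2) r1_ge0 r2_ge0 (le_lt_trans (i1min j isT) yj_lt0).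
move: (\sum_(k | k != i1) A i1 k * y k) (\sum_(k | k != i2) A i2 k * y k).
move: (\sum_(k | k != i1) A i1 k) (\sum_(k | k != i2) A i2 k) (y i1) (y i2).
move=> r1 r2 ymin ymax S1 S2 r1_lt1 r2_lt1 {}r1_ge0 {}r2_ge0 ymin_lt0 S1_le S2_ge row1 row2.
(* Row i2 gives ymax <= 1 - r2 ymin; inserted into row i1 this yields
   ymin (1 - r1 r2) >= 1 - r1 > 0, although ymin < 0. *)
have ymax_le : r1 * ymax <= r1 * (1 - r2 * ymin) by apply: ler_wpM2l => //; lra.
have r12_lt1 : r1 * r2 < 1.
  by apply: le_lt_trans r1_lt1; rewrite -[X in _ <= X]mulr1 ler_wpM2l // ltW.
have : ymin * (1 - r1 * r2) < 0 by rewrite pmulr_llt0 // subr_gt0.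
lra.
Qed.

End DiagonallyDominant.

(** * Classical and tropical bases of an NECP instance *)

Section NECP.
Variables (R : realType) (n : nat) (M : 'M[R]_n) (q : 'I_n -> R).
Hypothesis instance_Mq : necp_instance M q.

Local Notation P := (Pnorm M q).
Local Notation u := (colmax M q).
Local Notation N := (Nnorm M q).
Implicit Types (B : {set lhcol n}) (c : lhcol n).

Lemma q_gt0 i : 0 < q i.
Proof. by case: instance_Mq => _ []. Qed.

Lemma Acl_ge0 i c : 0 <= Acl M i c.
Proof. by case: c => j /=; rewrite ?ler0n // oppr_ge0; case: instance_Mq. Qed.

Lemma Pnorm_ge0 i c : 0 <= P i c.
Proof. by rewrite divr_ge0 ?Acl_ge0 // ltW ?q_gt0. Qed.

Lemma Pnorm_le_colmax i c : P i c <= u c.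
Proof. exact: (le_bigmax _ (fun i => P i c)). Qed.

Lemma colmax_gt0 c : 0 < u c.
Proof.
suff [i Pi_gt0] : exists i, 0 < P i c by apply: lt_le_trans Pi_gt0 (Pnorm_le_colmax i c).
case: c => j; first by exists j; rewrite /Pnorm /= eqxx divr_gt0 ?q_gt0.
have [_ [/(_ j) [i Mij_lt0] _]] := instance_Mq.
by exists i; rewrite /Pnorm /= divr_gt0 ?q_gt0 // oppr_gt0.
Qed.

Lemma Nnorm_ge0 i c : 0 <= N i c.
Proof. by rewrite divr_ge0 ?Pnorm_ge0 // ltW ?colmax_gt0. Qed.

Lemma Nnorm_le1 i c : N i c <= 1.
Proof. by rewrite ler_pdivrMr ?colmax_gt0 // mul1r Pnorm_le_colmax. Qed.

Lemma Nnorm_ge1E i c : (1 <= N i c) = (u c <= P i c).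
Proof. by rewrite ler_pdivlMr ?colmax_gt0 // mul1r. Qed.

Lemma Nnorm_ge1_eq1 i c : 1 <= N i c -> N i c = 1.
Proof. by move=> N_ge1; apply/le_anti; rewrite N_ge1 Nnorm_le1. Qed.

Lemma Nnorm_ge1P i c : (1 <= N i c) <-> forall k, P k c <= P i c.
Proof.
rewrite Nnorm_ge1E; split=> [uP k|Pmax]; first exact: le_trans (Pnorm_le_colmax k c) uP.
by apply/bigmax_leP; split=> [|k _]; [apply: Pnorm_ge0 | apply: Pmax].
Qed.

Lemma exists_Nnorm_ge1 c : exists i, 1 <= N i c.
Proof.
have i0 : 'I_n by case: c.
exists [arg max_(i > i0) P i c]%O.
by rewrite Nnorm_ge1E /colmax (bigmax_eq_arg _ i0) // => i _; apply: Pnorm_ge0.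
Qed.

Lemma Nnorm_inl_diag j : N j (inl j) = 1.
Proof.
apply/Nnorm_ge1_eq1/Nnorm_ge1P => k; rewrite /Pnorm /= eqxx.
case: eqP => [->//|_]; by rewrite mul0r divr_ge0 ?ler01 // ltW ?q_gt0.
Qed.

Lemma Nnorm_inl_offdiag i j : i != j -> N i (inl j) = 0.
Proof. by move=> /negbTE ij; rewrite /Nnorm /Pnorm /= ij !mul0r. Qed.

Lemma Nnorm_inl_ge1 i j : 1 <= N i (inl j) -> i = j.
Proof. by case: (eqVneq i j) => // /Nnorm_inl_offdiag ->; rewrite ler10. Qed.

Lemma Nnorm_sum (J : finType) (g : J -> lhcol n) (z : J -> R) i :
  \sum_k N i (g k) * (u (g k) * z k) = (\sum_k Acl M i (g k) * z k) / q i.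
Proof.
rewrite mulr_suml; apply: eq_bigr => k _.
have := colmax_gt0 (g k); have := q_gt0 i; rewrite /Nnorm /Pnorm => q_gt0 u_gt0.
by field; rewrite !gt_eqF.
Qed.

Lemma Atr_tlog i c : Atr M i c = tlog (Acl M i c).
Proof.
by case: c => j //=; rewrite /tlog; case: eqP => _; rewrite ?ltr01 ?ln1 ?ltxx.
Qed.

Lemma ln_Pnorm i c : 0 < Acl M i c -> ln (P i c) = ln (Acl M i c) - ln (q i).
Proof. by move=> Aic_gt0; rewrite ln_div // posrE ?q_gt0. Qed.

Lemma tropical_min_iff i c :
  (exists2 a, Atr M i c = Some a &
     forall k a', Atr M k c = Some a' -> ln (q i) - a <= ln (q k) - a') <->
  1 <= N i c.
Proof.
have Pnorm_pos k : 0 < Acl M k c -> P k c \is Num.pos.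
  by move=> Akc_gt0; rewrite posrE divr_gt0 ?q_gt0.
rewrite Nnorm_ge1P; split=> [[a]|Pmax].
  rewrite Atr_tlog /tlog; case: ifP => // Aic_gt0 [<-] amin k.
  have := amin k; rewrite Atr_tlog /tlog; case: ifP => [Akc_gt0|Akc_le0] akmin.
    rewrite -(ler_ln (Pnorm_pos _ Akc_gt0) (Pnorm_pos _ Aic_gt0)) !ln_Pnorm //.
    by have := akmin _ erefl; lra.
  have Akc0 : Acl M k c = 0 by apply/eqP; rewrite eq_le Acl_ge0 leNgt Akc_le0.
  by rewrite /Pnorm Akc0 mul0r; apply: Pnorm_ge0.
have Aic_gt0 : 0 < Acl M i c.
  have u_le : u c <= P i c by rewrite -Nnorm_ge1E; apply/Nnorm_ge1P.
  by have := lt_le_trans (colmax_gt0 c) u_le; rewrite pmulr_lgt0 // invr_gt0 q_gt0.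
exists (ln (Acl M i c)); first by rewrite Atr_tlog /tlog Aic_gt0.
move=> k a'; rewrite Atr_tlog /tlog; case: ifP => // Akc_gt0 [<-].
have := Pmax k; rewrite -(ler_ln (Pnorm_pos _ Akc_gt0) (Pnorm_pos _ Aic_gt0)) !ln_Pnorm //.
lra.
Qed.

Lemma AapplyE x i : Aapply M x i = x (inl i) - \sum_j M i j * x (inr j).
Proof.
rewrite /Aapply big_sumType /= (bigD1 i) //= eqxx mul1r big1 ?addr0 => [|j /negbTE]; last first.
  by rewrite eq_sym => ->; rewrite mul0r.
by rewrite -sumrN; congr (_ + _); apply: eq_bigr => j _; rewrite mulNr.
Qed.

Lemma Aapply_section B (f : 'I_n -> lhcol n) x i : injective f -> B = f @: setT ->
  supported B x -> Aapply M x i = \sum_k Acl M i (f k) * x (f k).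
Proof.
move=> injf BE sx; rewrite /Aapply (bigID (fun c => c \in B)) /=.
rewrite [X in _ + X]big1 ?addr0 => [|c /sx ->]; last by rewrite mulr0.
rewrite BE big_imset /=; last by move=> ? ? _ _ /injf.
by rewrite (eq_bigl predT) // => k; rewrite in_setT.
Qed.

Lemma fully_labeled_complementary B (x : lhcol n -> R) :
  #|B| = n -> fully_labeled B -> supported B x -> \sum_i x (inl i) * x (inr i) = 0.
Proof.
move=> cardB flB sx; apply: big1 => i _.
have labelB : (@label n) @: B = setT.
  apply/eqP; rewrite eqEsubset subsetT; apply/subsetP => j _.
  by have [e eB <-] := flB j; apply: imset_f.
have label_inj : {in B &, injective (@label n)}.
  by apply/imset_injP; rewrite labelB cardsT card_ord cardB.
case: (boolP (inl i \in B)) => [iB|/sx ->]; last by rewrite mul0r.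
case: (boolP (inr i \in B)) => [iB'|/sx ->]; last by rewrite mulr0.
by have := label_inj _ _ iB iB' erefl.
Qed.

Lemma solution_red_neq0 B x : #|B| = n -> (exists l, inr l \in B) -> supported B x ->
  (forall i, x (inl i) = \sum_j M i j * x (inr j) + q i) -> exists j, x (inr j) != 0.
Proof.
move=> cardB [l lB] sx xeq; apply/existsP; apply: contraT => /existsPn z0.
suff blueB : blue_basis n \subset B.
  have /eqP blueE : blue_basis n == B by rewrite eqEcard blueB card_blue_basis cardB leqnn.
  by move: lB; rewrite -blueE inE.
apply/subsetP => -[i|i]; rewrite inE // => _; apply: contraT => /sx xi0.
have := xeq i; rewrite xi0 big1 ?add0r => [q0|j _]; last by rewrite (eqP (negPn (z0 j))) mulr0.
by have := q_gt0 i; rewrite -q0 ltxx.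
Qed.

Hypothesis dominance_Mq : dominance M q.

Lemma covering_sum_lt2 (f : 'I_n -> lhcol n) : injective f ->
  (forall r, 1 <= N r (f r)) -> forall i, \sum_r N i (f r) < 2.
Proof.
move=> injf f_ge1 i; have [_ dom] := dominance_Mq.
have cardC : #|f @: setT| = n by rewrite card_imset // cardsT card_ord.
have coverC : covers_perm N (f @: setT).
  by exists f; split=> //; split=> // r; rewrite imset_f ?in_setT.
have := dom _ cardC coverC i; rewrite big_imset /=; last by move=> ? ? _ _; apply: injf.
by rewrite (eq_bigl predT) // => r; rewrite in_setT.
Qed.

Lemma Nnorm_ge1_uniq i i' c : 1 <= N i c -> 1 <= N i' c -> i = i'.
Proof.
(* Otherwise replacing the blue column i by c gives a covering whose row i' sums
   to 2. *)
case: c => j; first by move=> /Nnorm_inl_ge1 -> /Nnorm_inl_ge1 ->.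
move=> Ni_ge1 Ni'_ge1; apply/eqP/negPn/negP => ii'.
pose f k : lhcol n := if k == i then inr j else inl k.
have injf : injective f by move=> k1 k2; rewrite /f; do 2 case: eqP => [->|?] //; case.
have f_ge1 r : 1 <= N r (f r) by rewrite /f; case: eqP => [->//|_]; rewrite Nnorm_inl_diag.
have i'i : i' != i by rewrite eq_sym.
have := covering_sum_lt2 injf f_ge1 i'.
rewrite (bigD1 i) //= (bigD1 i' i'i) /= /f eqxx (negbTE i'i).
rewrite (Nnorm_ge1_eq1 Ni'_ge1) Nnorm_inl_diag.
have : 0 <= \sum_(k | (k != i) && (k != i')) N i' (if k == i then inr j else inl k).
  by apply: sumr_ge0 => k _; apply: Nnorm_ge0.
lra.
Qed.

(* The default j of [pick] is never used, by [exists_Nnorm_ge1]. *)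
Definition peak c : 'I_n :=
  match c with inl j => j | inr j => odflt j [pick i | 1 <= N i (inr j)] end.

Lemma peak_Nnorm c : N (peak c) c = 1.
Proof.
case: c => j /=; first exact: Nnorm_inl_diag.
case: pickP => [i /Nnorm_ge1_eq1 //|no_peak].
by have [i] := exists_Nnorm_ge1 (inr j); rewrite no_peak.
Qed.

Lemma peakE i c : 1 <= N i c -> peak c = i.
Proof. by apply: Nnorm_ge1_uniq; rewrite peak_Nnorm. Qed.

Lemma peak_inl j : peak (inl j) = j.
Proof. by []. Qed.

Lemma peak_section_diag (f : 'I_n -> lhcol n) : (forall i, peak (f i) = i) ->
  forall i, N i (f i) = 1.
Proof. by move=> peakf i; rewrite -{1}(peakf i) peak_Nnorm. Qed.

Lemma peak_section_offdiag (f : 'I_n -> lhcol n) : (forall i, peak (f i) = i) ->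
  forall i, \sum_(k | k != i) N i (f k) < 1.
Proof.
move=> peakf i; have f_ge1 r : 1 <= N r (f r) by rewrite peak_section_diag.
have := covering_sum_lt2 (can_inj peakf) f_ge1 i.
by rewrite (bigD1 i) //= peak_section_diag //; lra.
Qed.

Lemma tropical_basisE B : tropical_basis M q B <-> peak_basis peak B.
Proof.
split=> [[cardB [phi [_ [phiB phi_min]]]]|basisB].
  by apply: (peak_basis_of_section cardB phiB) => i; apply/peakE/tropical_min_iff.
have [cardB _] := basisB; have [f [peakf BE]] := peak_basis_section basisB.
split=> //; exists f; split; first exact: can_inj peakf.
split=> i; first by rewrite BE imset_f ?in_setT.
by apply/tropical_min_iff; rewrite peak_section_diag.
Qed.

Lemma peak_section_row B (f : 'I_n -> lhcol n) x i :
  (forall i, peak (f i) = i) -> B = f @: setT -> supported B x ->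
  \sum_k N i (f k) * (u (f k) * x (f k)) = Aapply M x i / q i.
Proof.
by move=> peakf BE sx; rewrite Nnorm_sum (Aapply_section _ (can_inj peakf) BE sx).
Qed.

Lemma peak_basis_kernel B x : peak_basis peak B -> supported B x ->
  (forall i, Aapply M x i = 0) -> forall c, x c = 0.
Proof.
move=> basisB sx Ax c; have [f [peakf BE]] := peak_basis_section basisB.
have y0 k : u (f k) * x (f k) = 0.
  move: k; apply: (dd_kernel (A := fun i k => N i (f k))) => [i k|i|i|i].
  - exact: Nnorm_ge0.
  - exact: peak_section_diag.
  - exact: peak_section_offdiag.
  - by rewrite (peak_section_row _ peakf BE sx) Ax mul0r.
case: (boolP (c \in B)) => [|/sx //]; rewrite BE => /imsetP[k _ ->].
by apply/eqP; rewrite -(mulrI_eq0 _ (lregP (lt0r_neq0 (colmax_gt0 (f k))))) y0.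
Qed.

Lemma peak_basis_solution_ge0 B x : peak_basis peak B -> supported B x ->
  (forall i, Aapply M x i = q i) -> forall c, 0 <= x c.
Proof.
move=> basisB sx Ax c; have [f [peakf BE]] := peak_basis_section basisB.
have y_ge0 k : 0 <= u (f k) * x (f k).
  move: k; apply: (dd_solution_ge0 (A := fun i k => N i (f k))) => [i k|i|i|i].
  - exact: Nnorm_ge0.
  - exact: peak_section_diag.
  - exact: peak_section_offdiag.
  - by rewrite (peak_section_row _ peakf BE sx) Ax divff // gt_eqF ?q_gt0.
case: (boolP (c \in B)) => [|/sx -> //]; rewrite BE => /imsetP[k _ ->].
by move: (y_ge0 k); rewrite pmulr_rge0 ?colmax_gt0.
Qed.

Lemma peak_basis_solvable B : peak_basis peak B ->
  exists x, supported B x /\ forall i, Aapply M x i = q i.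
Proof.
move=> basisB; have [f [peakf BE]] := peak_basis_section basisB.
pose F : 'M[R]_n := \matrix_(k, i) Acl M i (f k).
pose xof (w : 'rV[R]_n) c := if c \in B then w 0 (peak c) else 0.
have xof_supp w : supported B (xof w) by move=> c /negbTE cB; rewrite /xof cB.
have xof_f w k : xof w (f k) = w 0 k by rewrite /xof BE imset_f ?in_setT // peakf.
have Axof w i : Aapply M (xof w) i = (w *m F) 0 i.
  rewrite (Aapply_section _ (can_inj peakf) BE (xof_supp w)) mxE.
  by apply: eq_bigr => k _; rewrite xof_f mxE mulrC.
have unitF : F \in unitmx.
  rewrite unitmxE unitfE; apply/negP => /det0P[v v_neq0 vF0].
  have Av0 i : Aapply M (xof v) i = 0 by rewrite Axof vF0 mxE.
  have x0 := peak_basis_kernel basisB (xof_supp v) Av0.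
  by move/eqP: v_neq0; apply; apply/rowP => k; rewrite mxE -xof_f x0.
exists (xof ((\row_i q i) *m invmx F)); split=> // i.
by rewrite Axof -mulmxA mulVmx // mulmx1 mxE.
Qed.

Lemma peak_fiber_le1 (y : lhcol n -> R) r : (forall c, 0 <= y c) ->
  \sum_c N r c * y c = 1 -> \sum_(c | peak c == r) y c <= 1.
Proof.
move=> y_ge0 row; rewrite -row [X in _ <= X](bigID (fun c => peak c == r)) /=.
rewrite -[X in X <= _]addr0.
apply: lerD; last by apply: sumr_ge0 => c _; rewrite mulr_ge0 ?Nnorm_ge0.
by apply: ler_sum => c /eqP <-; rewrite peak_Nnorm mul1r.
Qed.

Lemma fiber_argmax B i0 : exists f : 'I_n -> lhcol n,
  [/\ forall r, peak (f r) = r,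
      forall c, c \in B -> N i0 c <= N i0 (f (peak c)) &
      forall r, (forall c, c \in B -> peak c != r) -> f r = inl r].
Proof.
pose fiber r c := (c \in B) && (peak c == r).
exists (fun r => if [pick c | fiber r c] is Some c0
                 then [arg max_(c > c0 | fiber r c) N i0 c]%O else inl r).
split=> [r|c cB|r no_peak].
- by case: pickP => [c0 c0r|//]; case: arg_maxP => // c /andP[_ /eqP].
- case: pickP => [c0 c0r|no_fiber]; first by case: arg_maxP => // c' _; apply; rewrite /fiber cB /=.
  by have := no_fiber c; rewrite /fiber cB eqxx.
case: pickP => [c0 /andP[c0B /eqP c0r]|//].
by have := no_peak c0 c0B; rewrite c0r eqxx.
Qed.

Lemma classical_peak_onto B : classical_basis M q B ->
  forall i, exists2 c, c \in B & peak c = i.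
Proof.
move=> [_ [_ [x [sx [x_ge0 Ax]]]]] i0.
case: (boolP [exists c in B, peak c == i0]) => [/exists_inP[c cB /eqP]|]; first by exists c.
move=> /exists_inPn no_peak; exfalso.
pose y c := u c * x c.
have y_ge0 c : 0 <= y c by rewrite mulr_ge0 // ltW ?colmax_gt0.
have y_supp c : c \notin B -> y c = 0 by move=> /sx xc; rewrite /y xc mulr0.
have row i : \sum_c N i c * y c = 1.
  by rewrite (Nnorm_sum id x) -[X in X / _]/(Aapply M x i) Ax divff // gt_eqF ?q_gt0.
have [f [peakf f_max f_inl]] := fiber_argmax B i0.
have mass : 1 <= \sum_(r | r != i0) N i0 (f r).
  rewrite -(row i0); apply: (@le_trans _ _ (\sum_c N i0 (f (peak c)) * y c)).
    apply: ler_sum => c _; case: (boolP (c \in B)) => [cB|/y_supp ->]; last by rewrite !mulr0.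
    by rewrite ler_wpM2r ?f_max.
  rewrite (partition_big peak predT) //= (bigD1 i0) //= big1 ?add0r.
    apply: ler_sum => r _; rewrite -[X in _ <= X]mulr1.
    rewrite (eq_bigr (fun c => N i0 (f r) * y c)) => [|c /eqP -> //].
    by rewrite -mulr_sumr ler_wpM2l ?Nnorm_ge0 ?peak_fiber_le1.
  move=> c /eqP peakc; rewrite y_supp ?mulr0 //.
  by apply/negP => cB; have := no_peak c cB; rewrite peakc eqxx.
have f_ge1 r : 1 <= N r (f r) by rewrite peak_section_diag.
have := covering_sum_lt2 (can_inj peakf) f_ge1 i0.
by rewrite (bigD1 i0) //= f_inl // Nnorm_inl_diag; lra.
Qed.

Lemma classical_basisE B : classical_basis M q B <-> peak_basis peak B.
Proof.
split=> basisB.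
  have [cardB _] := basisB.
  have /fin_all_exists2[f fB peakf] := classical_peak_onto basisB.
  exact: peak_basis_of_section cardB fB peakf.
have [cardB _] := basisB; split=> //; split; first by move=> x; apply: peak_basis_kernel basisB.
have [x [sx Ax]] := peak_basis_solvable basisB.
by exists x; split=> //; split=> //; apply: peak_basis_solution_ge0 basisB sx Ax.
Qed.

Lemma lh_final_solution B : lh_final peak B ->
  exists x : lhcol n -> R,
    [/\ supported B x, (forall c, 0 <= x c),
        (forall i, x (inl i) = \sum_(j < n) M i j * x (inr j) + q i),
        \sum_(i < n) x (inl i) * x (inr i) = 0 &
        exists j, x (inr j) != 0].
Proof.
move=> [flB /classical_basisE basisB redB]; have [cardB [_ [x [sx [x_ge0 Ax]]]]] := basisB.
have xeq i : x (inl i) = \sum_j M i j * x (inr j) + q i.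
  by rewrite -(Ax i) AapplyE addrC subrK.
exists x; split=> //; first exact: fully_labeled_complementary flB sx.
exact: solution_red_neq0 redB sx xeq.
Qed.

End NECP.

Theorem theorem5p6 (R : realType) (n : nat) (M : 'M[R]_n) (q : 'I_n -> R)
    (jstar : 'I_n) :
  necp_instance M q -> dominance M q ->
  (forall s : seq {set lhcol n},
     lh_path (classical_basis M q) jstar s <-> lh_path (tropical_basis M q) jstar s) /\
  exists s : seq {set lhcol n},
    [/\ lh_path (classical_basis M q) jstar s,
        (size s <= 2 * n - 1)%N &
        exists x : lhcol n -> R,
          [/\ supported (last (blue_basis n) s) x,
              (forall c, 0 <= x c),
              (forall i, x (inl i) = \sum_(j < n) M i j * x (inr j) + q i),
              \sum_(i < n) x (inl i) * x (inr i) = 0 &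
              exists j, x (inr j) != 0]].
Proof.
move=> instance_Mq dominance_Mq.
have classicalE : classical_basis M q = peak_basis (peak M q).
  by apply/funext => B; apply/propext; apply: classical_basisE.
have tropicalE : tropical_basis M q = peak_basis (peak M q).
  by apply/funext => B; apply/propext; apply: tropical_basisE.
rewrite classicalE tropicalE; split=> // .
have [s [path size_s final]] := lh_path_peak_basis jstar (@peak_inl R n M q).
by exists s; split=> //; apply: lh_final_solution.
Qed.
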